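(* Let $N\ge1$ and let $\mu_N\subset\mathbb{C}^*$ act on $\mathbb{C}^*$ by multiplication. The strict holomorphic endomorphisms of $[\mathbb{C}^*/\mu_N]$ are exactly the pairs $(\widetilde\psi,\sigma)$ with $\sigma(\zeta)=\zeta^m$ and $\widetilde\psi(z)=z^m g(z^N)$, where $m\in\mathbb{Z}$ and $g:\mathbb{C}^*\to\mathbb{C}^*$ is holomorphic. Modulo $2$-isomorphism, $g$ is determined up to multiplication by a constant root of unity.
   Context: For a subgroup $\Gamma\subset\mathbb{C}^*$ acting on $\mathbb{C}^*$ by multiplication, a strict endomorphism of $[\mathbb{C}^*/\Gamma]$ is a pair $(\widetilde\psi,\sigma)$ with $\widetilde\psi:\mathbb{C}^*\to\mathbb{C}^*$ holomorphic and $\sigma:\Gamma\to\Gamma$ a homomorphism such that $\widetilde\psi(\gamma z)=\sigma(\gamma)\widetilde\psi(z)$ for all $\gamma,z$. Two strict pairs $(\widetilde\psi,\sigma)$, $(\widetilde\psi',\sigma)$ are $2$-isomorphic if $\widetilde\psi'=a\widetilde\psi$ for some constant $a\in\Gamma$. $\mu_N$ is the group of $N$-th roots of unity. *)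

From Stdlib Require Import Reals ZArith.
From Coquelicot Require Import Coquelicot.

Open Scope C_scope.

Definition Czpow (z : C) (m : Z) : C :=
  match m with
  | Z0 => 1
  | Zpos p => Cpow z (Pos.to_nat p)
  | Zneg p => / Cpow z (Pos.to_nat p)
  end.

Definition holo_Cstar (f : C -> C) : Prop :=
  forall z : C, z <> 0 -> @ex_derive C_AbsRing C_NormedModule f z.

Definition maps_Cstar (f : C -> C) : Prop :=
  forall z : C, z <> 0 -> f z <> 0.

(* a holomorphic map C^* -> C^* (only values on C^* matter) *)
Definition holo_map_Cstar (f : C -> C) : Prop := holo_Cstar f /\ maps_Cstar f.

Definition mu (N : nat) (z : C) : Prop := Cpow z N = 1.

(* strict endomorphism (psi, sigma) of [C^*/mu_N]; sigma is only relevant on mu_N *)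
Definition strict_endo (N : nat) (psi sigma : C -> C) : Prop :=
  holo_map_Cstar psi /\
  (forall g : C, mu N g -> mu N (sigma g)) /\
  (forall g h : C, mu N g -> mu N h -> sigma (g * h) = sigma g * sigma h) /\
  (forall g z : C, mu N g -> z <> 0 -> psi (g * z) = sigma g * psi z).

(* 2-isomorphism of strict pairs with the same sigma: psi' = a psi, a in mu_N *)
Definition two_iso (N : nat) (psi psi' : C -> C) : Prop :=
  exists a : C, mu N a /\ forall z : C, z <> 0 -> psi' z = a * psi z.

From Stdlib Require Import Reals ZArith Lra Lia.
From Coquelicot Require Import Coquelicot.
Open Scope C_scope.

(** Every endomorphism of the cyclic group mu_N is a power map, so sigma(zeta) = zeta^j.  Then
    F(z) = psi(z) / z^j is holomorphic on C^* and mu_N-invariant, hence F(z) = g(z^N) where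
    g(w) = F(r) for any N-th root r of w.  Near each w0 <> 0 there is a continuous branch h of
    the N-th root (from polar coordinates, rotated so that it avoids the cut of the argument),
    and a continuous local inverse of z |-> z^N is holomorphic by Caratheodory's criterion,
    since w - w0 = (h w - h w0) * Q (h w) with Q (h w0) = N (h w0)^(N-1) <> 0.  So g = F o h
    is holomorphic.  The 2-isomorphism statement follows by evaluating at N-th roots. *)

(** * Complex derivatives *)

(* Coquelicot's complex derivative lives in two module structures on C: [C_NormedModule]
   (used by [holo_Cstar]) and the ring's own module [CK] (used by the product rule); the
   topology on the variable is in both cases the one of [CU]. *)
Local Notation CU := (AbsRing_UniformSpace C_AbsRing).
Local Notation CK := (AbsRing_NormedModule C_AbsRing).
Local Notation ex_Cderive f z := (@ex_derive C_AbsRing C_NormedModule f z).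
Local Notation Ccontinuous f z := (@continuous CU CU f z).
Local Notation Rcontinuous f z := (@continuous CU R_UniformSpace f z).

Lemma is_derive_C_iff (f : C -> C) (x l : C) :
  @is_derive C_AbsRing C_NormedModule f x l <-> @is_derive C_AbsRing CK f x l.
Proof. split; intros [[] Hd]; (split; [split|]); assumption. Qed.

Lemma ex_derive_C_iff (f : C -> C) (x : C) :
  ex_Cderive f x <-> @ex_derive C_AbsRing CK f x.
Proof. split; intros [l Hl]; exists l; apply is_derive_C_iff; exact Hl. Qed.

Lemma Cdiv_neq0 (a b : C) : a <> 0 -> b <> 0 -> a / b <> 0.
Proof. intros Ha Hb E. apply Ha. replace a with (a / b * b) by (field; exact Hb). rewrite E. ring. Qed.

Lemma Cmod_sub_Cmod_le (x y : C) : (Rabs (Cmod y - Cmod x) <= Cmod (y - x))%R.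
Proof.
  apply Rabs_le. split.
  - assert (H := Cmod_triangle y (x - y)). replace (y + (x - y)) with x in H by ring.
    rewrite <- (Cmod_opp (x - y)) in H. replace (- (x - y)) with (y - x) in H by ring. lra.
  - assert (H := Cmod_triangle x (y - x)). replace (x + (y - x)) with y in H by ring. lra.
Qed.

Lemma locally_Cstar (x : C) : x <> 0 -> @locally CU x (fun y : C => y <> 0).
Proof.
  intros Hx. exists (mkposreal _ (proj1 (Cmod_gt_0 x) Hx)). intros y Hy Hy0.
  change (Cmod (y - x) < Cmod x)%R in Hy.
  rewrite Hy0, <- Cmod_opp in Hy. replace (- (0 - x)) with x in Hy by ring. lra.
Qed.

Lemma Ccontinuous_mult (f g : C -> C) (x : C) :
  Ccontinuous f x -> Ccontinuous g x -> Ccontinuous (fun y => f y * g y) x.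
Proof. apply (continuous_mult (K := C_AbsRing)). Qed.

Lemma Ccontinuous_comp (f g : C -> C) (x : C) :
  Ccontinuous f x -> Ccontinuous g (f x) -> Ccontinuous (fun y => g (f y)) x.
Proof. apply continuous_comp. Qed.

Lemma continuous_of_ex_Cderive (f : C -> C) (x : C) : ex_Cderive f x -> Ccontinuous f x.
Proof. intros Hf P HP. apply (ex_derive_continuous f x Hf). apply locally_C. exact HP. Qed.

Lemma is_derive_caratheodory (f phi : C -> C) (x : C) :
  Ccontinuous phi x -> @locally CU x (fun y => f y - f x = (y - x) * phi y) ->
  @is_derive C_AbsRing C_NormedModule f x (phi x).
Proof.
  intros Hphi Hslope. split; [apply is_linear_scal_l|].
  intros x' Hx'. apply (@is_filter_lim_locally_unique _ CK) in Hx'. subst x'.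
  intros eps. generalize (filter_and _ _ (proj1 (filterlim_locally _ _) Hphi eps) Hslope).
  apply filter_imp. intros y [Hclose Hy].
  change (Cmod (f y - f x - (y - x) * phi x) <= eps * Cmod (y - x))%R.
  change (Cmod (phi y - phi x) < eps)%R in Hclose.
  rewrite Hy. replace ((y - x) * phi y - (y - x) * phi x) with ((y - x) * (phi y - phi x)) by ring.
  rewrite Cmod_mult, Rmult_comm. apply Rmult_le_compat_r; [apply Cmod_ge_0|lra].
Qed.

Lemma continuous_Cinv (x : C) : x <> 0 -> Ccontinuous Cinv x.
Proof.
  intros Hx. apply Cmod_gt_0 in Hx as Hr. set (r := Cmod x) in Hr.
  apply filterlim_locally. intros [e He].
  assert (Hd : (0 < Rmin (r / 2) (e * r * r / 2))%R).
  { apply Rmin_glb_lt; [lra|]. assert (0 < e * r * r)%R by (apply Rmult_lt_0_compat; nra). lra. }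
  exists (mkposreal _ Hd). intros y Hy. change C in y.
  change (Cmod (y - x) < Rmin (r / 2) (e * r * r / 2))%R in Hy.
  change (Cmod (/ y - / x) < e)%R.
  assert (Hmin_l := Rmin_l (r / 2) (e * r * r / 2)).
  assert (Hmin_r := Rmin_r (r / 2) (e * r * r / 2)).
  assert (Hy_big : (r / 2 <= Cmod y)%R)
    by (assert (H := Cmod_sub_Cmod_le x y); apply Rabs_le_between in H; fold r in H; lra).
  assert (Hy0 : y <> 0) by (intros E; rewrite E, Cmod_0 in Hy_big; lra).
  replace (/ y - / x) with ((- (y - x)) * / x * / y) by (field; auto).
  rewrite !Cmod_mult, Cmod_opp, !Cmod_inv by auto. fold r.
  apply (Rmult_lt_reg_r (r * Cmod y)); [nra|].
  replace (Cmod (y - x) * / r * / Cmod y * (r * Cmod y))%R with (Cmod (y - x)) by (field; lra).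
  nra.
Qed.

Lemma ex_Cderive_mult (f g : C -> C) (x : C) :
  ex_Cderive f x -> ex_Cderive g x -> ex_Cderive (fun y => f y * g y) x.
Proof.
  rewrite !ex_derive_C_iff. intros [df Hf] [dg Hg].
  eexists. apply (is_derive_mult f g x df dg Hf Hg Cmult_comm).
Qed.

Lemma ex_Cderive_pow (n : nat) (x : C) : ex_Cderive (fun y => Cpow y n) x.
Proof.
  induction n as [|n IH]; simpl; [apply ex_derive_const|].
  apply ex_Cderive_mult; [apply ex_derive_C_iff, ex_derive_id|exact IH].
Qed.

Lemma ex_Cderive_inv (f : C -> C) (x : C) :
  ex_Cderive f x -> f x <> 0 -> ex_Cderive (fun y => / f y) x.
Proof.
  intros Hf Hfx. apply (ex_derive_comp Cinv f); [|apply ex_derive_C_iff, Hf].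
  exists (- / f x * / f x). apply (is_derive_caratheodory Cinv (fun y => - / f x * / y)).
  - apply Ccontinuous_mult; [apply continuous_const|apply continuous_Cinv, Hfx].
  - generalize (locally_Cstar _ Hfx). apply filter_imp. intros y Hy. field. auto.
Qed.

Fixpoint pow_sub_quot (z a : C) (n : nat) : C :=
  match n with O => 0 | S n => Cpow z n + a * pow_sub_quot z a n end.

Lemma pow_sub_factor (z a : C) (n : nat) : Cpow z n - Cpow a n = (z - a) * pow_sub_quot z a n.
Proof.
  induction n as [|n IH]; simpl; [ring|].
  replace (z * Cpow z n - a * Cpow a n) with ((z - a) * Cpow z n + a * (Cpow z n - Cpow a n)) by ring.
  rewrite IH. ring.
Qed.

Lemma pow_sub_quot_diag (a : C) (n : nat) : pow_sub_quot a a n * a = INR n * Cpow a n.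
Proof.
  induction n as [|n IH]; simpl pow_sub_quot; [simpl; ring|].
  rewrite S_INR, RtoC_plus, Cpow_S.
  replace ((Cpow a n + a * pow_sub_quot a a n) * a) with (a * Cpow a n + a * (pow_sub_quot a a n * a)) by ring.
  rewrite IH. ring.
Qed.

Lemma pow_sub_quot_diag_neq0 (a : C) (n : nat) : a <> 0 -> (1 <= n)%nat -> pow_sub_quot a a n <> 0.
Proof.
  intros Ha Hn E. assert (H := pow_sub_quot_diag a n). rewrite E, Cmult_0_l in H.
  symmetry in H. revert H. apply Cmult_neq_0; [|apply Cpow_nz, Ha].
  intros E'. apply RtoC_inj in E'. apply not_0_INR in E'; [exact E'|lia].
Qed.

Lemma ex_Cderive_pow_sub_quot (a : C) (n : nat) (x : C) : ex_Cderive (fun z => pow_sub_quot z a n) x.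
Proof.
  induction n as [|n IH]; simpl; [apply ex_derive_const|].
  apply (ex_derive_plus (fun z => Cpow z n)); [apply ex_Cderive_pow|].
  apply ex_Cderive_mult; [apply ex_derive_const|exact IH].
Qed.

Lemma ex_Cderive_local_inverse_pow (h : C -> C) (w0 : C) (n : nat) : (1 <= n)%nat ->
  Ccontinuous h w0 -> h w0 <> 0 -> @locally CU w0 (fun w => Cpow (h w) n = w) ->
  ex_Cderive h w0.
Proof.
  intros Hn Hh Hh0 Hpow. set (z0 := h w0).
  set (q := fun z => pow_sub_quot z z0 n).
  assert (Hq0 : q z0 <> 0) by (apply pow_sub_quot_diag_neq0; auto).
  assert (Hq : ex_Cderive q z0) by apply ex_Cderive_pow_sub_quot.
  assert (Hqh : Ccontinuous (fun w => q (h w)) w0)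
    by (apply (Ccontinuous_comp h q); [exact Hh|apply continuous_of_ex_Cderive, Hq]).
  exists (/ q z0). apply (is_derive_caratheodory h (fun w => / q (h w))).
  - apply (Ccontinuous_comp h (fun z => / q z)); [exact Hh|].
    apply continuous_of_ex_Cderive, ex_Cderive_inv; auto.
  - assert (Hw0 : Cpow z0 n = w0) by exact (locally_singleton _ _ Hpow).
    generalize (filter_and _ _ Hpow (Hqh _ (locally_Cstar _ Hq0))). apply filter_imp.
    intros w [Hw Hqw]. change C in w.
    assert (E : w - w0 = (h w - z0) * q (h w)) by (rewrite <- Hw, <- Hw0 at 1; apply pow_sub_factor).
    rewrite E. fold z0. field. exact Hqw.
Qed.

Lemma Czpow_of_nat (z : C) (j : nat) : Czpow z (Z.of_nat j) = Cpow z j.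
Proof. destruct j as [|j]; [reflexivity|]. simpl. rewrite SuccNat2Pos.id_succ. reflexivity. Qed.

Lemma Czpow_neq0 (z : C) (m : Z) : z <> 0 -> Czpow z m <> 0.
Proof.
  intros Hz. destruct m; simpl; [apply C1_nz|apply Cpow_nz, Hz|].
  intros E. apply C1_nz.
  rewrite <- (Cinv_r (Cpow z (Pos.to_nat p))), E by (apply Cpow_nz, Hz). ring.
Qed.

Lemma Czpow_mult_l (z w : C) (m : Z) : z <> 0 -> w <> 0 -> Czpow (z * w) m = Czpow z m * Czpow w m.
Proof.
  intros Hz Hw. destruct m; simpl; rewrite ?Cpow_mult_l; [ring|reflexivity|].
  field. split; apply Cpow_nz; assumption.
Qed.

Lemma Czpow_1_l (m : Z) : Czpow 1 m = 1.
Proof. destruct m; simpl; rewrite ?Cpow_1_l; [reflexivity|reflexivity|field; apply C1_nz]. Qed.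

Lemma Cpow_Czpow (z : C) (m : Z) (n : nat) : z <> 0 -> Cpow (Czpow z m) n = Czpow (Cpow z n) m.
Proof.
  intros Hz. destruct m; simpl; [apply Cpow_1_l| |rewrite Cpow_inv by (apply Cpow_nz, Hz)];
    rewrite <- !Cpow_mult_r, Nat.mul_comm; reflexivity.
Qed.

Lemma ex_Cderive_Czpow (m : Z) (x : C) : x <> 0 -> ex_Cderive (fun z => Czpow z m) x.
Proof.
  intros Hx. destruct m; simpl; [apply ex_derive_const|apply ex_Cderive_pow|].
  apply ex_Cderive_inv; [apply ex_Cderive_pow|apply Cpow_nz, Hx].
Qed.

Lemma continuous_of_lipschitz (A : C -> R) (x : C) :
  (forall y, Rabs (A y - A x) <= Cmod (y - x))%R -> Rcontinuous A x.
Proof.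
  intros HA. apply filterlim_locally. intros eps. exists eps. intros y Hy.
  change (Cmod (y - x) < eps)%R in Hy. change (Rabs (A y - A x) < eps)%R.
  eapply Rle_lt_trans; [apply HA|exact Hy].
Qed.

Lemma continuous_Re (x : C) : Rcontinuous Re x.
Proof.
  apply continuous_of_lipschitz. intros y.
  replace (Re y - Re x)%R with (Re (y - x)) by (unfold Re; simpl; ring). apply re_le_Cmod.
Qed.

Lemma continuous_Im (x : C) : Rcontinuous Im x.
Proof.
  apply continuous_of_lipschitz. intros y.
  replace (Im y - Im x)%R with (snd (y - x)) by (unfold Im; simpl; ring).
  eapply Rle_trans; [apply Rmax_r|apply Rmax_Cmod].
Qed.

Lemma continuous_Cmod (x : C) : Rcontinuous Cmod x.
Proof. apply continuous_of_lipschitz, Cmod_sub_Cmod_le. Qed.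

Lemma continuous_RtoC (A : C -> R) (x : C) : Rcontinuous A x -> Ccontinuous (fun y => RtoC (A y)) x.
Proof.
  intros HA. apply filterlim_locally. intros eps.
  generalize (proj1 (filterlim_locally _ _) HA eps). apply filter_imp. intros y Hy.
  change (Rabs (A y - A x) < eps)%R in Hy. change (Cmod (RtoC (A y) - RtoC (A x)) < eps)%R.
  rewrite <- RtoC_minus, Cmod_R. exact Hy.
Qed.

Lemma Rcontinuous_mult (A B : C -> R) (x : C) :
  Rcontinuous A x -> Rcontinuous B x -> Rcontinuous (fun y => A y * B y)%R x.
Proof. apply (continuous_mult (K := R_AbsRing)). Qed.

Lemma Rcontinuous_comp (A : C -> R) (f : R -> R) (x : C) :
  Rcontinuous A x -> @continuous R_UniformSpace R_UniformSpace f (A x) -> Rcontinuous (fun y => f (A y)) x.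
Proof. apply continuous_comp. Qed.

Lemma continuous_C_pair (A B : C -> R) (x : C) :
  Rcontinuous A x -> Rcontinuous B x -> Ccontinuous (fun y => (A y, B y)) x.
Proof.
  intros HA HB. apply (continuous_ext (T := CU) (U := CU) (fun y => RtoC (A y) + Ci * RtoC (B y))).
  { intros y. unfold RtoC, Ci, Cplus, Cmult. simpl. f_equal; ring. }
  apply (continuous_plus (U := CU) (V := CK)).
  - apply continuous_RtoC, HA.
  - apply Ccontinuous_mult; [apply continuous_const|apply continuous_RtoC, HB].
Qed.

Lemma locally_pos (A : C -> R) (x : C) :
  Rcontinuous A x -> (0 < A x)%R -> @locally CU x (fun y => 0 < A y)%R.
Proof.
  intros HA Hx. apply HA. exists (mkposreal _ Hx). intros r Hr.
  change (Rabs (r - A x) < A x)%R in Hr. apply Rabs_def2 in Hr. simpl. lra.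
Qed.

(** * Polar form, N-th roots and roots of unity *)

Definition cis (t : R) : C := (cos t, sin t).

Lemma cis_add (s t : R) : cis (s + t) = cis s * cis t.
Proof. unfold cis, Cmult; simpl. rewrite cos_plus, sin_plus. f_equal; ring. Qed.

Lemma cis_pow (t : R) (n : nat) : Cpow (cis t) n = cis (INR n * t).
Proof.
  induction n as [|n IH]; simpl Cpow.
  - unfold cis. rewrite Rmult_0_l, cos_0, sin_0. reflexivity.
  - rewrite IH, <- cis_add, S_INR. f_equal. ring.
Qed.

Lemma cis_double_atan (t : R) :
  cis (2 * atan t) = ((1 - t * t) / (1 + t * t), 2 * t / (1 + t * t))%R.
Proof.
  unfold cis. rewrite cos_2a_cos, sin_2a, cos_atan, sin_atan.
  assert (Hs : (sqrt (1 + t²) * sqrt (1 + t²) = 1 + t * t)%R) by (rewrite sqrt_sqrt; unfold Rsqr; nra).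
  assert (Hs0 : (0 < sqrt (1 + t²))%R) by (apply sqrt_lt_R0; unfold Rsqr; nra).
  set (s := sqrt (1 + t²)) in *. f_equal.
  - replace (2 * (1 / s) * (1 / s) - 1)%R with (2 / (s * s) - 1)%R by (field; lra).
    rewrite Hs. field. nra.
  - replace (2 * (t / s) * (1 / s))%R with (2 * t / (s * s))%R by (field; lra).
    rewrite Hs. reflexivity.
Qed.

(* Half-angle formula: continuous off the closed negative real axis; the value [PI] on that
   axis only serves to make [polar_form] hold everywhere. *)
Definition arg (w : C) : R :=
  if Req_dec_T (Cmod w + Re w) 0 then PI else 2 * atan (Im w / (Cmod w + Re w)).

Lemma polar_form (w : C) : w = Cmod w * cis (arg w).
Proof.
  assert (Hsq := Cmod2_alt w). assert (Hre := re_le_Cmod w). apply Rabs_le_between in Hre.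
  unfold arg. destruct Req_dec_T as [Hd|Hd]; destruct w as [x y]; unfold Re, Im in *; simpl in *;
    set (r := Cmod (x, y)) in *; clearbody r.
  - assert (Hy : (y * y = 0)%R) by nra. apply Rsqr_0_uniq in Hy.
    unfold cis. rewrite cos_PI, sin_PI. unfold RtoC, Cmult; simpl. f_equal; lra.
  - remember (r + x)%R as d eqn:Hd_def.
    assert (Hpos : (0 < d)%R) by (destruct (Rle_lt_dec d 0); [lra|assumption]).
    assert (Hsum : (d * d + y * y = 2 * r * d)%R) by nra.
    assert (Hdiff : (d * d - y * y = 2 * x * d)%R) by nra.
    assert (Hr : (0 < r)%R) by nra.
    rewrite cis_double_atan. unfold RtoC, Cmult; simpl. rewrite !Rmult_0_l, Rminus_0_r, Rplus_0_r. f_equal.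
    + replace ((1 - y / d * (y / d)) / (1 + y / d * (y / d)))%R with ((d * d - y * y) / (d * d + y * y))%R
        by (field; nra).
      rewrite Hsum, Hdiff. field. lra.
    + replace (2 * (y / d) / (1 + y / d * (y / d)))%R with (2 * y * d / (d * d + y * y))%R by (field; nra).
      rewrite Hsum. field. lra.
Qed.

Definition root (N : nat) (w : C) : C := Rpower (Cmod w) (/ INR N) * cis (arg w / INR N).

Lemma continuous_arg (w : C) : (0 < Cmod w + Re w)%R -> Rcontinuous arg w.
Proof.
  intros Hw.
  assert (HD : Rcontinuous (fun y => Cmod y + Re y)%R w)
    by (apply (continuous_plus (U := CU) (V := R_NormedModule)); [apply continuous_Cmod|apply continuous_Re]).
  apply (continuous_ext_loc (T := CU) (U := R_UniformSpace) _ (fun y => 2 * atan (Im y / (Cmod y + Re y)))%R).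
  - generalize (locally_pos _ _ HD Hw). apply filter_imp. intros y Hy.
    unfold arg. destruct Req_dec_T; [lra|reflexivity].
  - apply Rcontinuous_mult; [apply continuous_const|].
    apply (Rcontinuous_comp _ atan); [|apply continuous_atan].
    apply Rcontinuous_mult; [apply continuous_Im|].
    apply (Rcontinuous_comp _ Rinv); [exact HD|].
    apply continuous_Rinv. lra.
Qed.

Lemma continuous_root (N : nat) (w : C) : (0 < Cmod w + Re w)%R -> Ccontinuous (root N) w.
Proof.
  intros Hw. assert (Hre := re_le_Cmod w). apply Rabs_le_between in Hre.
  assert (Hr : (0 < Cmod w)%R) by lra.
  apply Ccontinuous_mult.
  - apply continuous_RtoC.
    unfold Rpower. apply (Rcontinuous_comp _ exp); [|apply continuous_exp].
    apply Rcontinuous_mult; [apply continuous_const|].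
    apply (Rcontinuous_comp Cmod ln); [apply continuous_Cmod|apply continuous_ln, Hr].
  - assert (Harg : Rcontinuous (fun y => arg y / INR N)%R w).
    { apply Rcontinuous_mult; [apply continuous_arg, Hw|apply continuous_const]. }
    apply continuous_C_pair;
      [apply (Rcontinuous_comp _ cos); [exact Harg|apply continuous_cos]
      |apply (Rcontinuous_comp _ sin); [exact Harg|apply continuous_sin]].
Qed.

Section RootsOfOrderN.

Variable N : nat.
Hypothesis HN : (1 <= N)%nat.

Lemma INR_N_neq0 : INR N <> 0%R.
Proof. apply not_0_INR. lia. Qed.

Lemma root_pow (w : C) : w <> 0 -> Cpow (root N w) N = w.
Proof.
  intros Hw. unfold root. rewrite Cpow_mult_l, <- RtoC_pow, cis_pow.
  rewrite <- Rpower_pow by apply exp_pos.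
  rewrite Rpower_mult, Rinv_l, Rpower_1 by (apply INR_N_neq0 || apply Cmod_gt_0, Hw).
  replace (INR N * (arg w / INR N))%R with (arg w) by (field; apply INR_N_neq0).
  symmetry. apply polar_form.
Qed.

Lemma Cpow_N_0 : Cpow 0 N = 0.
Proof. destruct N as [|n]; [lia|]. simpl. ring. Qed.

Lemma root_neq0 (w : C) : w <> 0 -> root N w <> 0.
Proof. intros Hw E. apply Hw. rewrite <- (root_pow w Hw), E. apply Cpow_N_0. Qed.

Lemma local_root_branch (w0 : C) : w0 <> 0 ->
  exists h : C -> C, Ccontinuous h w0 /\ h w0 <> 0 /\ @locally CU w0 (fun w => Cpow (h w) N = w).
Proof.
  (* [root N] jumps across the negative real axis, but [w / w0] stays near 1. *)
  intros Hw0. exists (fun w => root N w0 * root N (w / w0)).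
  assert (H1 : w0 / w0 = 1) by (field; exact Hw0).
  split; [|split].
  - apply Ccontinuous_mult; [apply continuous_const|].
    apply (Ccontinuous_comp (fun w => w / w0) (root N)).
    + apply Ccontinuous_mult; [apply continuous_id|apply continuous_const].
    + simpl. rewrite H1. apply continuous_root. rewrite Cmod_1. simpl. lra.
  - rewrite H1. apply Cmult_neq_0; apply root_neq0; [exact Hw0|apply C1_nz].
  - generalize (locally_Cstar _ Hw0). apply filter_imp. intros w Hw. change C in w.
    rewrite Cpow_mult_l, (root_pow w0 Hw0), root_pow by (apply Cdiv_neq0; assumption).
    field. exact Hw0.
Qed.

Lemma holo_Cstar_descent (F : C -> C) : holo_Cstar F ->
  (forall z z' : C, z <> 0 -> z' <> 0 -> Cpow z N = Cpow z' N -> F z = F z') ->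
  holo_Cstar (fun w => F (root N w)).
Proof.
  intros HF Hinv w0 Hw0.
  destruct (local_root_branch w0 Hw0) as (h & Hh & Hh0 & Hpow).
  apply (ex_derive_ext_loc (fun w => F (h w))).
  - generalize (filter_and _ _ Hpow (locally_Cstar _ Hw0)). apply filter_imp.
    intros w [Hw Hw_neq0]. change C in w. apply Hinv.
    + intros E. apply Hw_neq0. rewrite <- Hw, E. apply Cpow_N_0.
    + apply root_neq0, Hw_neq0.
    + rewrite Hw, root_pow; [reflexivity|exact Hw_neq0].
  - apply (ex_derive_comp F h); [apply HF, Hh0|].
    apply ex_derive_C_iff, (ex_Cderive_local_inverse_pow h w0 N HN Hh Hh0 Hpow).
Qed.

Definition omega : C := cis (2 * PI / INR N).

Lemma mu_1 : mu N 1.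
Proof. apply Cpow_1_l. Qed.

Lemma mu_mult (a b : C) : mu N a -> mu N b -> mu N (a * b).
Proof. unfold mu. intros Ha Hb. rewrite Cpow_mult_l, Ha, Hb. ring. Qed.

Lemma mu_neq0 (a : C) : mu N a -> a <> 0.
Proof. intros Ha E. apply C1_nz. rewrite <- Ha, E. apply Cpow_N_0. Qed.

Lemma mu_omega_pow (k : nat) : mu N (Cpow omega k).
Proof.
  unfold mu, omega. rewrite <- Cpow_mult_r, Nat.mul_comm, Cpow_mult_r, cis_pow.
  replace (INR N * (2 * PI / INR N))%R with (2 * PI)%R by (field; apply INR_N_neq0).
  unfold cis. rewrite cos_2PI, sin_2PI. apply Cpow_1_l.
Qed.

Lemma cis_eq_1 (t : R) : sin (t / 2) = 0%R -> cis t = 1.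
Proof.
  intros Hs. replace t with (2 * (t / 2))%R by field.
  unfold cis. rewrite cos_2a_sin, sin_2a, Hs. unfold RtoC. f_equal; ring.
Qed.

Lemma mu_eq_omega_pow (a : C) : mu N a -> exists k : nat, a = Cpow omega k.
Proof.
  intros Ha.
  assert (Hmod : Cmod a = 1%R).
  { assert (H := f_equal Cmod Ha). rewrite Cmod_pow, Cmod_1 in H.
    destruct (pow_R1 _ _ H) as [H'|H']; [|lia]. rewrite <- H'. symmetry. apply Rabs_pos_eq, Cmod_ge_0. }
  set (t := arg a).
  assert (Ht : a = cis t) by (rewrite (polar_form a) at 1; rewrite Hmod; apply Cmult_1_l).
  assert (Hcos : cos (INR N * t) = 1%R)
    by (unfold mu in Ha; rewrite Ht, cis_pow in Ha; exact (f_equal fst Ha)).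
  assert (Hsin : sin (INR N * t / 2) = 0%R).
  { assert (H := cos_2a_sin (INR N * t / 2)).
    replace (2 * (INR N * t / 2))%R with (INR N * t)%R in H by field. nra. }
  (* [N t = 2 k PI]; reducing [k] modulo [N] gives a natural exponent. *)
  destruct (sin_eq_0_0 _ Hsin) as [k Hk].
  assert (HNZ : (0 < Z.of_nat N)%Z) by lia.
  exists (Z.to_nat (k mod Z.of_nat N)).
  unfold omega. rewrite cis_pow, Ht.
  rewrite INR_IZR_INZ, Z2Nat.id by (apply Z.mod_pos_bound, HNZ).
  replace t with (IZR (k mod Z.of_nat N) * (2 * PI / INR N) + IZR (k / Z.of_nat N) * (2 * PI))%R.
  - rewrite cis_add, (cis_eq_1 (IZR (k / Z.of_nat N) * (2 * PI))); [apply Cmult_1_r|].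
    apply sin_eq_0_1. exists (k / Z.of_nat N)%Z. field.
  - assert (Hdiv := Z.div_mod k (Z.of_nat N) ltac:(lia)).
    apply (f_equal IZR) in Hdiv. rewrite plus_IZR, mult_IZR, <- INR_IZR_INZ in Hdiv.
    assert (HNR := INR_N_neq0).
    apply (Rmult_eq_reg_l (INR N)); [|exact HNR].
    replace (INR N * t)%R with (2 * (INR N * t / 2))%R by field. rewrite Hk.
    rewrite Hdiv at 1. field. exact HNR.
Qed.

Lemma mu_hom_is_pow (sigma : C -> C) :
  (forall a : C, mu N a -> mu N (sigma a)) ->
  (forall a b : C, mu N a -> mu N b -> sigma (a * b) = sigma a * sigma b) ->
  exists j : nat, forall a : C, mu N a -> sigma a = Cpow a j.
Proof.
  intros Hmu Hmult.
  destruct (mu_eq_omega_pow (sigma omega)) as [j Hj].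
  { apply Hmu. rewrite <- (Cpow_1_r omega). apply mu_omega_pow. }
  assert (Hs1 : sigma 1 = 1).
  { assert (H := Hmult 1 1 mu_1 mu_1). rewrite Cmult_1_l in H.
    assert (Hn := mu_neq0 _ (Hmu 1 mu_1)).
    replace (sigma 1) with (sigma 1 * sigma 1 * / sigma 1) by (field; exact Hn).
    rewrite <- H. field. exact Hn. }
  exists j. intros a Ha. destruct (mu_eq_omega_pow a Ha) as [k ->].
  rewrite <- !Cpow_mult_r, Nat.mul_comm, Cpow_mult_r, <- Hj.
  clear Ha. induction k as [|k IH]; [exact Hs1|].
  rewrite !Cpow_S, Hmult, IH; [reflexivity| |apply mu_omega_pow].
  rewrite <- (Cpow_1_r omega). apply mu_omega_pow.
Qed.

End RootsOfOrderN.

(** * Strict endomorphisms of [C^*/mu_N] *)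

Section StrictEndomorphisms.

Variable N : nat.
Hypothesis HN : (1 <= N)%nat.

Lemma equivariant_quotient_invariant (psi : C -> C) (j : nat) :
  (forall a z : C, mu N a -> z <> 0 -> psi (a * z) = Cpow a j * psi z) ->
  forall z z' : C, z <> 0 -> z' <> 0 -> Cpow z N = Cpow z' N ->
  psi z / Cpow z j = psi z' / Cpow z' j.
Proof.
  intros Hpsi z z' Hz Hz' Hzz'. set (a := z' / z).
  assert (Ha : mu N a).
  { unfold mu, a, Cdiv. rewrite Cpow_mult_l, Cpow_inv, <- Hzz' by exact Hz.
    apply Cinv_r, Cpow_nz, Hz. }
  replace z' with (a * z) by (unfold a; field; exact Hz).
  rewrite Hpsi, Cpow_mult_l by assumption.
  field. split; apply Cpow_nz; [exact Hz|apply (mu_neq0 N HN), Ha].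
Qed.

Lemma strict_endo_factor (psi sigma : C -> C) : strict_endo N psi sigma ->
  exists (j : nat) (g : C -> C), holo_map_Cstar g /\
    (forall a : C, mu N a -> sigma a = Cpow a j) /\
    (forall z : C, z <> 0 -> psi z = Cpow z j * g (Cpow z N)).
Proof.
  intros [[Hholo Hmaps] [Hmu [Hmult Hequiv]]].
  destruct (mu_hom_is_pow N HN sigma Hmu Hmult) as [j Hj].
  set (F := fun z => psi z / Cpow z j).
  assert (HF : forall z z' : C, z <> 0 -> z' <> 0 -> Cpow z N = Cpow z' N -> F z = F z').
  { apply (equivariant_quotient_invariant psi j). intros a z Ha Hz. rewrite <- Hj by exact Ha. auto. }
  exists j, (fun w => F (root N w)). split; [split|split; [exact Hj|]].
  - apply (holo_Cstar_descent N HN); [|exact HF]. intros z Hz.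
    apply ex_Cderive_mult; [apply Hholo, Hz|].
    apply ex_Cderive_inv; [apply ex_Cderive_pow|apply Cpow_nz, Hz].
  - intros w Hw. assert (Hr := root_neq0 N HN w Hw).
    apply Cdiv_neq0; [apply Hmaps, Hr|apply Cpow_nz, Hr].
  - intros z Hz. assert (HzN : Cpow z N <> 0) by (apply Cpow_nz, Hz).
    rewrite (HF _ z (root_neq0 N HN _ HzN) Hz (root_pow N HN _ HzN)).
    unfold F. field. apply Cpow_nz, Hz.
Qed.

Lemma factor_strict_endo (m : Z) (g psi sigma : C -> C) : holo_map_Cstar g ->
  (forall a : C, mu N a -> sigma a = Czpow a m) ->
  (forall z : C, z <> 0 -> psi z = Czpow z m * g (Cpow z N)) ->
  strict_endo N psi sigma.
Proof.
  intros [Hholo Hmaps] Hsigma Hpsi. split; [split|split; [|split]].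
  - intros z0 Hz0. apply (ex_derive_ext_loc (fun z => Czpow z m * g (Cpow z N))).
    + generalize (locally_Cstar _ Hz0). apply filter_imp. intros z Hz. symmetry. apply Hpsi, Hz.
    + apply ex_Cderive_mult; [apply ex_Cderive_Czpow, Hz0|].
      apply (ex_derive_comp g (fun z => Cpow z N)); [apply Hholo, Cpow_nz, Hz0|].
      apply ex_derive_C_iff, ex_Cderive_pow.
  - intros z Hz. rewrite Hpsi by exact Hz.
    apply Cmult_neq_0; [apply Czpow_neq0, Hz|apply Hmaps, Cpow_nz, Hz].
  - intros a Ha. rewrite Hsigma by exact Ha. unfold mu.
    rewrite Cpow_Czpow, Ha by (apply (mu_neq0 N HN), Ha). apply Czpow_1_l.
  - intros a b Ha Hb. rewrite !Hsigma by (exact Ha || exact Hb || apply mu_mult; assumption).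
    apply Czpow_mult_l; apply (mu_neq0 N HN); assumption.
  - intros a z Ha Hz. assert (Ha0 := mu_neq0 N HN a Ha).
    rewrite Hpsi, Hpsi, Hsigma, Czpow_mult_l, Cpow_mult_l, Ha, Cmult_1_l by (assumption || apply Cmult_neq_0; assumption).
    ring.
Qed.

Lemma two_iso_factor_iff (m : Z) (g g' : C -> C) :
  two_iso N (fun z => Czpow z m * g (Cpow z N)) (fun z => Czpow z m * g' (Cpow z N)) <->
  exists a : C, mu N a /\ forall w : C, w <> 0 -> g' w = a * g w.
Proof.
  split; intros [a [Ha H]]; exists a; split; try exact Ha.
  - intros w Hw. assert (Hr := root_neq0 N HN w Hw).
    assert (E := H _ Hr). rewrite (root_pow N HN w Hw) in E.
    assert (Hc := Czpow_neq0 _ m Hr).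
    replace (g' w) with (/ Czpow (root N w) m * (Czpow (root N w) m * g' w)) by (field; exact Hc).
    rewrite E. field. exact Hc.
  - intros z Hz. rewrite H by (apply Cpow_nz, Hz). ring.
Qed.

End StrictEndomorphisms.

Theorem mainTheorem9 (N : nat) (HN : (1 <= N)%nat) :
  (forall psi sigma : C -> C,
     strict_endo N psi sigma <->
     exists (m : Z) (g : C -> C),
       holo_map_Cstar g /\
       (forall zeta : C, mu N zeta -> sigma zeta = Czpow zeta m) /\
       (forall z : C, z <> 0 -> psi z = Czpow z m * g (Cpow z N)))
  /\
  (forall (m : Z) (g g' : C -> C),
     holo_map_Cstar g -> holo_map_Cstar g' ->
     (two_iso N (fun z : C => Czpow z m * g (Cpow z N))
                (fun z : C => Czpow z m * g' (Cpow z N)) <->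
      exists a : C, mu N a /\ forall w : C, w <> 0 -> g' w = a * g w)).
Proof.
  split.
  - intros psi sigma. split.
    + intros Hendo. destruct (strict_endo_factor N HN psi sigma Hendo) as (j & g & Hg & Hsigma & Hpsi).
      exists (Z.of_nat j), g.
      split; [exact Hg|split; intros; rewrite Czpow_of_nat; auto].
    + intros (m & g & Hg & Hsigma & Hpsi). exact (factor_strict_endo N HN m g psi sigma Hg Hsigma Hpsi).
  - intros m g g' _ _. apply two_iso_factor_iff, HN.
Qed.
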